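(* Let $S(t,p,q,x,y,u,v)=\sum_{\pi}t^{|\pi|}p^{\mathrm{asc}(\pi)}q^{\mathrm{des}(\pi)}x^{\mathrm{lmax}(\pi)}y^{\mathrm{rmax}(\pi)}u^{\mathrm{lmin}(\pi)}v^{\mathrm{rmin}(\pi)}$ over all separable permutations and $I(t,p,q,x,y,u,v)$ the same sum over irreducible separable permutations. Then $$S(t,p,q,x,y,u,v)-I(t,p,q,x,y,u,v)=p\,I(t,p,q,x,1,u,v)\,S(t,p,q,x,y,1,v)=p\,I(t,p,q,x,y,1,v)\,S(t,p,q,x,1,u,v).$$
   Context: A permutation of length $n$ is a word $\pi=\pi_1\cdots\pi_n$ containing each element of $[n]$ exactly once; $|\pi|=n$. For $\pi$ of length $m$, $\sigma$ of length $n$: $\pi\oplus\sigma=\pi_1\cdots\pi_m(\sigma_1+m)\cdots(\sigma_n+m)$, $\pi\ominus\sigma=(\pi_1+n)\cdots(\pi_m+n)\sigma_1\cdots\sigma_n$. Separable permutations are those of length $\ge1$ obtained from $1$ by repeatedly applying $\oplus,\ominus$ (equivalently, avoiding $2413$ and $3142$). The permutation $1$ is irreducible; a permutation of length $n\ge2$ is irreducible if there is no $i$, $2\le i\le n$, such that every element of $\pi_1\cdots\pi_{i-1}$ is less than every element of $\pi_i\cdots\pi_n$. $\mathrm{asc}(\pi)=\#\{i<n:\pi_i<\pi_{i+1}\}$, $\mathrm{des}(\pi)=\#\{i<n:\pi_i>\pi_{i+1}\}$; $\pi_i$ is a left-to-right maximum (minimum) if $\pi_i>\pi_j$ ($\pi_i<\pi_j$)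 for all $j<i$, a right-to-left maximum (minimum) if $\pi_i>\pi_j$ ($\pi_i<\pi_j$) for all $j>i$; $\mathrm{lmax},\mathrm{lmin},\mathrm{rmax},\mathrm{rmin}$ count these. (The paper writes $I(t,p,q,x,u,v)$ etc., omitting arguments equal to $1$.) *)

(* Permutations are words (seq nat) over [1..n], as in the paper. *)
From HB Require Import structures.
From mathcomp Require Import all_boot all_order all_algebra.
From mathcomp Require Import boolp.
Set Implicit Arguments. Unset Strict Implicit. Unset Printing Implicit Defensive.
Import GRing.Theory.
Local Open Scope ring_scope.

Definition oplus (a b : seq nat) : seq nat := a ++ map (fun j => (j + size a)%N) b.
Definition ominus (a b : seq nat) : seq nat := map (fun j => (j + size b)%N) a ++ b.

Inductive separable : seq nat -> Prop :=
| sep_one : separable [:: 1%N]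
| sep_oplus a b : separable a -> separable b -> separable (oplus a b)
| sep_ominus a b : separable a -> separable b -> separable (ominus a b).

(* irreducible: 1 is irreducible; for length >= 2, no i with 2 <= i <= n such that
   every element of pi_1..pi_{i-1} is less than every element of pi_i..pi_n *)
Definition irreducible (s : seq nat) : bool :=
  if size s == 1%N then true
  else ~~ has (fun i => all (fun a => all (fun b => a < b)%N (drop i.-1 s)) (take i.-1 s))
             (iota 2 (size s).-1).

Definition asc (s : seq nat) : nat := count (fun ab : nat * nat => ab.1 < ab.2)%N (zip s (behead s)).
Definition des (s : seq nat) : nat := count (fun ab : nat * nat => ab.1 > ab.2)%N (zip s (behead s)).
(* positions are 0-indexed here: position i holds pi_{i+1} *)
Definition lmax (s : seq nat) : nat :=
  count (fun i => all (fun b => b < nth 0 s i)%N (take i s)) (iota 0 (size s)).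
Definition lmin (s : seq nat) : nat :=
  count (fun i => all (fun b => nth 0 s i < b)%N (take i s)) (iota 0 (size s)).
Definition rmax (s : seq nat) : nat :=
  count (fun i => all (fun b => b < nth 0 s i)%N (drop i.+1 s)) (iota 0 (size s)).
Definition rmin (s : seq nat) : nat :=
  count (fun i => all (fun b => nth 0 s i < b)%N (drop i.+1 s)) (iota 0 (size s)).

Definition wt (R : comNzRingType) (p q x y u v : R) (s : seq nat) : R :=
  p ^+ asc s * q ^+ des s * x ^+ lmax s * y ^+ rmax s * u ^+ lmin s * v ^+ rmin s.

(* Formal power series in t, represented by the sequence of coefficients of t^n.
   permutations (iota 1 n) is the duplicate-free list of all permutations of [n]. *)
Definition Sgf (R : comNzRingType) (p q x y u v : R) : nat -> R :=
  fun n => \sum_(s <- permutations (iota 1 n) | `[< separable s >]) wt p q x y u v s.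

Definition Igf (R : comNzRingType) (p q x y u v : R) : nat -> R :=
  fun n => \sum_(s <- permutations (iota 1 n) | `[< separable s >] && irreducible s)
             wt p q x y u v s.

Definition ser_sub (R : comNzRingType) (f g : nat -> R) : nat -> R := fun n => f n - g n.
Definition ser_scale (R : comNzRingType) (c : R) (f : nat -> R) : nat -> R := fun n => c * f n.
Definition ser_mul (R : comNzRingType) (f g : nat -> R) : nat -> R :=
  fun n => \sum_(k < n.+1) f k * g (n - k)%N.

(* A separable permutation of length at least 2 is reducible exactly when it is a direct
   sum [oplus a b] of two separable permutations: a cut of a separable permutation splits it
   into two separable blocks (an [ominus] has no cut, its first entry exceeding its last), and
   cutting at the first (resp. last) cut gives the unique factorization with [a] (resp. [b])
   irreducible.  Across a direct sum one ascent appears at the junction, des, lmax and rmin add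
   up, lmin is that of [a] and rmax that of [b]; so the weight of [oplus a b] is [p] times the
   weight of [a] at [y = 1] times that of [b] at [u = 1], and summing over the factorizations
   gives both identities. *)

From HB Require Import structures.
From mathcomp Require Import all_boot all_order all_algebra.
From mathcomp Require Import boolp zify ring.
Set Implicit Arguments. Unset Strict Implicit. Unset Printing Implicit Defensive.
Import GRing.Theory.

Local Notation perms n := (permutations (iota 1 n)).
Local Notation sepb s := (`[< separable s >]).

Definition perm_word (s : seq nat) := perm_eq s (iota 1 (size s)).

Definition below (a c : seq nat) := all (fun x => all (fun y => x < y) c) a.

Definition cut (s : seq nat) k := below (take k s) (drop k s).

Lemma perm_wordP s x : perm_word s -> (x \in s) = (0 < x <= size s).
Proof. by move/perm_mem ->; rewrite mem_iota add1n ltnS. Qed.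

Lemma mem_perms s n : (s \in perms n) = perm_word s && (size s == n).
Proof.
rewrite mem_permutations /perm_word; apply/idP/andP => [ps | [ps /eqP <-//]].
by have := perm_size ps; rewrite size_iota => sn; rewrite sn ps eqxx.
Qed.

Lemma size_oplus a b : size (oplus a b) = size a + size b.
Proof. by rewrite /oplus size_cat size_map. Qed.

Lemma perm_word_oplus a b : perm_word a -> perm_word b -> perm_word (oplus a b).
Proof.
move=> pa pb; rewrite /perm_word size_oplus iotaD /oplus perm_cat //.
rewrite addnC iotaDl (eq_map (fun j => addnC _ j)); exact: perm_map.
Qed.

Lemma separable_perm_word s : separable s -> perm_word s.
Proof.
elim=> [//|a b _ pa _ pb|a b _ pa _ pb]; first exact: perm_word_oplus.
have := perm_word_oplus pb pa; rewrite /perm_word /ominus /oplus !size_cat !size_map.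
by rewrite perm_catC addnC.
Qed.

Lemma separable_size_gt0 s : separable s -> 0 < size s.
Proof. by elim=> // a b _ ha _ hb; rewrite ?size_oplus /ominus ?size_cat ?size_map; lia. Qed.

Lemma below_catl a1 a2 c : below (a1 ++ a2) c = below a1 c && below a2 c.
Proof. exact: all_cat. Qed.

Lemma below_catr a c1 c2 : below a (c1 ++ c2) = below a c1 && below a c2.
Proof. by rewrite /below -all_predI; apply: eq_all => x; rewrite /= all_cat. Qed.

Lemma below_subl a a' c : {subset a' <= a} -> below a c -> below a' c.
Proof. by move=> sa /allP ac; apply/allP => x /sa /ac. Qed.

Lemma below_subr a c c' : {subset c' <= c} -> below a c -> below a c'.
Proof. by move=> sc /allP ac; apply/allP => x /ac /allP xc; apply/allP => y /sc /xc. Qed.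

Lemma below_shift m a c :
  below (map (fun j => j + m) a) (map (fun j => j + m) c) = below a c.
Proof.
rewrite /below all_map; apply: eq_all => x /=.
by rewrite all_map; apply: eq_all => y /=; rewrite ltn_add2r.
Qed.

Lemma below_oplus a b : perm_word a -> perm_word b -> below a (map (fun j => j + size a) b).
Proof.
move=> pa pb; apply/allP => x; rewrite (perm_wordP _ pa) => xa.
by apply/allP => _ /mapP [y + ->]; rewrite (perm_wordP _ pb); lia.
Qed.

Lemma drop_catl (T : Type) k (a c : seq T) : k <= size a -> drop k (a ++ c) = drop k a ++ c.
Proof.
rewrite drop_cat leq_eqVlt => /orP [/eqP ->|-> //].
by rewrite ltnn subnn drop0 drop_size.
Qed.

Lemma take_oplus_l a b k : k <= size a -> take k (oplus a b) = take k a.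
Proof. exact: takel_cat. Qed.

Lemma drop_oplus_l a b k : k <= size a ->
  drop k (oplus a b) = drop k a ++ map (fun j => j + size a) b.
Proof. exact: drop_catl. Qed.

Lemma take_oplus_r a b j : take (size a + j) (oplus a b) = oplus a (take j b).
Proof. by rewrite /oplus take_cat ltnNge leq_addr addKn map_take. Qed.

Lemma drop_oplus_r a b j :
  drop (size a + j) (oplus a b) = map (fun i => i + size a) (drop j b).
Proof. by rewrite /oplus drop_cat ltnNge leq_addr addKn map_drop. Qed.

Section CutOplus.
Variables a b : seq nat.
Hypotheses (pa : perm_word a) (pb : perm_word b).

Lemma cut_oplus_size : cut (oplus a b) (size a).
Proof.
rewrite /cut -[size a]addn0 take_oplus_r drop_oplus_r take0 drop0.
by rewrite /oplus cats0 below_oplus.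
Qed.

Lemma cut_oplus_l k : k <= size a -> cut (oplus a b) k = cut a k.
Proof.
move=> ka; rewrite /cut take_oplus_l // drop_oplus_l // below_catr andb_idr //.
by move=> _; apply: below_subl (below_oplus pa pb) => x /mem_take.
Qed.

Lemma cut_oplus_r j : cut (oplus a b) (size a + j) = cut b j.
Proof.
rewrite /cut take_oplus_r drop_oplus_r /oplus below_catl below_shift.
by rewrite (below_subr _ (below_oplus pa pb)) // => x /mapP [y /mem_drop yb ->]; apply: map_f.
Qed.

End CutOplus.

Lemma cut_head_last s k : 0 < k < size s -> cut s k -> head 0 s < last 0 s.
Proof.
move=> /andP [k0 ks] /allP cs.
have hs : head 0 s \in take k s.
  by case: s ks cs => // x s _ _; case: k k0 => // k _; apply: mem_head.
have ls : last 0 s \in drop k s.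
  rewrite -[s in last _ s](cat_take_drop k s) last_cat.
  have : 0 < size (drop k s) by rewrite size_drop subn_gt0.
  by case: (drop k s) => // y c _; apply: mem_last.
exact: (allP (cs _ hs)).
Qed.

Lemma ominus_not_cut a b k : separable a -> separable b ->
  0 < k < size (ominus a b) -> ~~ cut (ominus a b) k.
Proof.
move=> sa sb hk; apply/negP => /(cut_head_last hk).
have la : last 0 (ominus a b) \in b.
  rewrite /ominus last_cat.
  by case: b sb {hk} => [/separable_size_gt0 //|z b _]; apply: mem_last.
have ha : head 0 (ominus a b) \in map (fun j => j + size b) a.
  by case: a sa {hk la} => [/separable_size_gt0 //|x a _]; apply: mem_head.
move: la ha; rewrite (perm_wordP _ (separable_perm_word sb)) => la /mapP [x + ->].
by rewrite (perm_wordP _ (separable_perm_word sa)); lia.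
Qed.

Lemma separable_cut s k : separable s -> 0 < k < size s -> cut s k ->
  separable (take k s) /\ separable (map (subn^~ k) (drop k s)).
Proof.
move=> ss; elim: ss k => [|a b sa IHa sb IHb|a b sa IHa sb IHb] k; first by case: k => [|[]].
- have [pa pb] := (separable_perm_word sa, separable_perm_word sb).
  rewrite size_oplus; case: (ltngtP k (size a)) => [ka|ak|->] hk.
  + have kle := ltnW ka.
    rewrite cut_oplus_l // take_oplus_l // drop_oplus_l //.
    case/(IHa k); first by rewrite ka andbT; case/andP: hk.
    move=> sa1 sa2; split=> //.
    suff -> : map (subn^~ k) (drop k a ++ map (fun j => j + size a) b)
            = oplus (map (subn^~ k) (drop k a)) b by apply: sep_oplus.
    rewrite /oplus map_cat size_map size_drop -map_comp; congr (_ ++ _).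
    by apply: eq_map => j /=; lia.
  + have -> : k = size a + (k - size a) by lia.
    rewrite cut_oplus_r // take_oplus_r drop_oplus_r.
    case/(IHb (k - size a)); first lia.
    move=> sb1 sb2; split; first exact: sep_oplus.
    by rewrite -map_comp (@eq_map _ _ _ (subn^~ (k - size a))) // => i /=; lia.
  + move=> _; rewrite /oplus take_size_cat // drop_size_cat // -map_comp.
    by rewrite (@eq_map _ _ _ id) ?map_id // => i /=; rewrite addnK.
- by move=> hk; rewrite (negbTE (ominus_not_cut sa sb hk)).
Qed.

Lemma separable_cut_oplus s k : separable s -> 0 < k < size s -> cut s k ->
  [/\ separable (take k s), separable (map (subn^~ k) (drop k s))
    & s = oplus (take k s) (map (subn^~ k) (drop k s))].
Proof.
move=> ss hk cs; have [st sd] := separable_cut ss hk cs; split=> //.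
have szt : size (take k s) = k by rewrite size_take; case/andP: hk => _ ->.
rewrite /oplus szt -map_comp map_id_in ?cat_take_drop // => y yd /=.
have kt : k \in take k s by rewrite (perm_wordP _ (separable_perm_word st)) szt; lia.
by have := allP (allP cs _ kt) _ yd; lia.
Qed.

Lemma irreducibleE s : irreducible s = ~~ has (cut s) (iota 1 (size s).-1).
Proof.
rewrite /irreducible; case: eqP => [->//|_].
by rewrite (iotaDl 1 1) has_map.
Qed.

Lemma irreducibleP s : reflect (forall k, 0 < k < size s -> ~~ cut s k) (irreducible s).
Proof.
rewrite irreducibleE; apply: (iffP hasPn) => h k hk; apply: h.
  by rewrite mem_iota; lia.
by move: hk; rewrite mem_iota; lia.
Qed.

Lemma reducibleP s : reflect (exists2 k, 0 < k < size s & cut s k) (~~ irreducible s).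
Proof.
rewrite irreducibleE negbK; apply: (iffP hasP) => -[k hk ck]; exists k => //.
  by move: hk; rewrite mem_iota; lia.
by rewrite mem_iota; lia.
Qed.

Lemma oplus_reducible a b : separable a -> separable b -> ~~ irreducible (oplus a b).
Proof.
move=> sa sb; apply/reducibleP; exists (size a).
  by rewrite size_oplus; have := separable_size_gt0 sa; have := separable_size_gt0 sb; lia.
exact: cut_oplus_size (separable_perm_word sa) (separable_perm_word sb).
Qed.

Section OplusFactors.
Variables a b a' b' : seq nat.
Hypotheses (sa : separable a) (sb : separable b) (sa' : separable a') (sb' : separable b').
Hypothesis eq_oplus : oplus a b = oplus a' b'.

Lemma oplus_irreducible_l_leq : irreducible a' -> size a' <= size a.
Proof.
move=> /irreducibleP ia'; rewrite leqNgt; apply/negP => lt.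
apply: (negP (ia' (size a) _)); first by rewrite lt separable_size_gt0.
rewrite -(cut_oplus_l (separable_perm_word sa') (separable_perm_word sb') (ltnW lt)).
by rewrite -eq_oplus cut_oplus_size ?separable_perm_word.
Qed.

Lemma oplus_irreducible_r_leq : irreducible b -> size a' <= size a.
Proof.
move=> /irreducibleP ib; rewrite leqNgt; apply/negP => lt.
have := congr1 size eq_oplus; rewrite !size_oplus => sz.
apply: (negP (ib (size a' - size a) _)); first by have := separable_size_gt0 sb'; lia.
rewrite -(cut_oplus_r (separable_perm_word sa) (separable_perm_word sb)) (subnKC (ltnW lt)).
by rewrite eq_oplus cut_oplus_size ?separable_perm_word.
Qed.

End OplusFactors.

Lemma oplus_irreducible_l_uniq a b a' b' :
  sepb a && irreducible a -> sepb b -> sepb a' && irreducible a' -> sepb b' ->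
  oplus a b = oplus a' b' -> size a = size a'.
Proof.
move=> /andP [/asboolP sa ia] /asboolP sb /andP [/asboolP sa' ia'] /asboolP sb' E.
by apply/eqP; rewrite eqn_leq (oplus_irreducible_l_leq sa' sb' sa sb (esym E) ia)
  (oplus_irreducible_l_leq sa sb sa' sb' E ia').
Qed.

Lemma oplus_irreducible_r_uniq a b a' b' :
  sepb a -> sepb b && irreducible b -> sepb a' -> sepb b' && irreducible b' ->
  oplus a b = oplus a' b' -> size a = size a'.
Proof.
move=> /asboolP sa /andP [/asboolP sb ib] /asboolP sa' /andP [/asboolP sb' ib'] E.
by apply/eqP; rewrite eqn_leq (oplus_irreducible_r_leq sa sb sa' sb' E ib)
  (oplus_irreducible_r_leq sa' sb' sa sb (esym E) ib').
Qed.

Lemma reducible_oplus_irreducible_l s : separable s -> ~~ irreducible s ->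
  exists a b, [/\ sepb a && irreducible a, sepb b & s = oplus a b].
Proof.
move=> ss /reducibleP [k0 hk0 ck0].
have ex_cut : exists k, (0 < k < size s) && cut s k by exists k0; rewrite hk0 ck0.
case: (ex_minnP ex_cut) => k /andP [hk ck] kmin.
have [sa sb E] := separable_cut_oplus ss hk ck.
exists (take k s), (map (subn^~ k) (drop k s)); rewrite !asboolT //; split=> //.
have szt : size (take k s) = k by rewrite size_take; case/andP: hk => _ ->.
apply/irreducibleP => j hj; apply/negP => cj.
have cs : cut s j by rewrite E cut_oplus_l ?separable_perm_word // szt; lia.
suff /kmin : (0 < j < size s) && cut s j by lia.
by rewrite cs andbT; rewrite szt in hj; lia.
Qed.

Lemma reducible_oplus_irreducible_r s : separable s -> ~~ irreducible s ->
  exists a b, [/\ sepb a, sepb b && irreducible b & s = oplus a b].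
Proof.
move=> ss /reducibleP [k0 hk0 ck0].
have ex_cut : exists k, (0 < k < size s) && cut s k by exists k0; rewrite hk0 ck0.
have ub k : (0 < k < size s) && cut s k -> k <= size s by case/andP => /andP [_ /ltnW].
case: (ex_maxnP ex_cut ub) => k /andP [hk ck] kmax.
have [sa sb E] := separable_cut_oplus ss hk ck.
exists (take k s), (map (subn^~ k) (drop k s)); rewrite !asboolT //; split=> //.
have szt : size (take k s) = k by rewrite size_take; case/andP: hk => _ ->.
have := congr1 size E; rewrite size_oplus szt => sz.
apply/irreducibleP => j hj; apply/negP => cj.
have cs : cut s (size (take k s) + j) by rewrite {1}E cut_oplus_r ?separable_perm_word.
rewrite szt in cs.
suff /kmax : (0 < k + j < size s) && cut s (k + j) by lia.
by rewrite cs andbT; lia.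
Qed.

Section Statistics.
Variable r : rel nat.

Definition adj_count (s : seq nat) :=
  count (fun ab : nat * nat => r ab.1 ab.2) (zip s (behead s)).

Definition left_records (s : seq nat) :=
  count (fun i => all (r^~ (nth 0 s i)) (take i s)) (iota 0 (size s)).

Definition right_records (s : seq nat) :=
  count (fun i => all (r^~ (nth 0 s i)) (drop i.+1 s)) (iota 0 (size s)).

Lemma adj_count_cat a c : 0 < size a -> 0 < size c ->
  adj_count (a ++ c) = adj_count a + r (last 0 a) (head 0 c) + adj_count c.
Proof.
case: a => // x a _; case: c => // y c _; rewrite /adj_count.
elim: a x => [|z a IH] x /=; first lia.
by have /= -> := IH z; lia.
Qed.

Lemma adj_count_map f s : {mono f : x y / r x y} -> adj_count (map f s) = adj_count s.
Proof.
move=> mf; rewrite /adj_count; case: s => //= x s; elim: s x => //= y s IH x.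
by rewrite mf IH.
Qed.

Lemma left_records_cat a c : left_records (a ++ c) =
  left_records a + count (fun j => all (r^~ (nth 0 c j)) (a ++ take j c)) (iota 0 (size c)).
Proof.
rewrite /left_records size_cat iotaD count_cat add0n; congr (_ + _).
  apply: eq_in_count => i; rewrite mem_iota => /andP [_ hi] /=.
  by rewrite nth_cat hi takel_cat // ltnW.
rewrite -[size a]addn0 iotaDl count_map; apply: eq_count => j /=.
by rewrite nth_cat take_cat ltnNge leq_addr /= addKn.
Qed.

Lemma right_records_cat a c : right_records (a ++ c) =
  count (fun i => all (r^~ (nth 0 a i)) (drop i.+1 a ++ c)) (iota 0 (size a))
  + right_records c.
Proof.
rewrite /right_records size_cat iotaD count_cat add0n; congr (_ + _).
  apply: eq_in_count => i; rewrite mem_iota => /andP [_ hi] /=.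
  by rewrite nth_cat hi drop_catl.
rewrite -[size a]addn0 iotaDl count_map; apply: eq_count => j /=.
by rewrite nth_cat ltnNge leq_addr /= addKn -addnS drop_cat ltnNge leq_addr /= addKn.
Qed.

Lemma left_records_map f s :
  {mono f : x y / r x y} -> left_records (map f s) = left_records s.
Proof.
move=> mf; rewrite /left_records size_map; apply: eq_in_count => i.
rewrite mem_iota => /andP [_ hi] /=.
rewrite (set_nth_default (f 0)) ?size_map // (nth_map 0) // -map_take all_map.
by apply: eq_all => x /=; rewrite mf.
Qed.

Lemma right_records_map f s :
  {mono f : x y / r x y} -> right_records (map f s) = right_records s.
Proof.
move=> mf; rewrite /right_records size_map; apply: eq_in_count => i.
rewrite mem_iota => /andP [_ hi] /=.
rewrite (set_nth_default (f 0)) ?size_map // (nth_map 0) // -map_drop all_map.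
by apply: eq_all => x /=; rewrite mf.
Qed.

End Statistics.

Lemma below_last_head a c : 0 < size a -> 0 < size c -> below a c -> last 0 a < head 0 c.
Proof.
case: a => // x a _; case: c => // y c _ /allP ac.
exact: (allP (ac _ (mem_last x a))) _ (mem_head y c).
Qed.

Section DirectSumStatistics.
Variables a c : seq nat.
Hypotheses (a0 : 0 < size a) (c0 : 0 < size c) (ac : below a c).

Let lt_nth x j : x \in a -> j < size c -> x < nth 0 c j.
Proof. by move=> xa jc; apply: (allP (allP ac x xa)); apply: mem_nth. Qed.

Lemma asc_cat : asc (a ++ c) = asc a + asc c + 1.
Proof.
rewrite -![asc _]/(adj_count (fun x y => x < y) _) adj_count_cat //= below_last_head //.
by rewrite addnAC.
Qed.

Lemma des_cat : des (a ++ c) = des a + des c.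
Proof.
rewrite -![des _]/(adj_count (fun x y => y < x) _) adj_count_cat //=.
by rewrite ltnNge ltnW ?below_last_head // addn0.
Qed.

Lemma lmax_cat : lmax (a ++ c) = lmax a + lmax c.
Proof.
rewrite -![lmax _]/(left_records (fun x y => x < y) _) left_records_cat; congr (_ + _).
apply: eq_in_count => j; rewrite mem_iota add0n => /andP [_ jc] /=.
by rewrite all_cat andb_idl // => _; apply/allP => x xa; apply: lt_nth.
Qed.

Lemma lmin_cat : lmin (a ++ c) = lmin a.
Proof.
rewrite -![lmin _]/(left_records (fun x y => y < x) _) left_records_cat.
rewrite (@eq_in_count _ _ pred0) ?count_pred0 ?addn0 // => j.
rewrite mem_iota add0n => /andP [_ jc] /=; rewrite all_cat.
case: a a0 lt_nth => // x a' _ /(_ x j (mem_head _ _) jc) lt.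
by rewrite /= ltnNge ltnW.
Qed.

Lemma rmax_cat : rmax (a ++ c) = rmax c.
Proof.
rewrite -![rmax _]/(right_records (fun x y => x < y) _) right_records_cat.
rewrite (@eq_in_count _ _ pred0) ?count_pred0 // => i.
rewrite mem_iota add0n => /andP [_ ia] /=; rewrite all_cat.
case: c c0 lt_nth => // y c' _ /(_ _ 0 (mem_nth 0 ia) isT) lt.
by rewrite /= ltnNge ltnW ?andbF.
Qed.

Lemma rmin_cat : rmin (a ++ c) = rmin a + rmin c.
Proof.
rewrite -![rmin _]/(right_records (fun x y => y < x) _) right_records_cat; congr (_ + _).
apply: eq_in_count => i; rewrite mem_iota add0n => /andP [_ ia] /=.
rewrite all_cat andb_idr // => _; apply/allP => y yc /=.
exact: (allP (allP ac _ (mem_nth 0 ia))).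
Qed.

End DirectSumStatistics.

Lemma wt_shift (R : comNzRingType) (p q x y u v : R) m s :
  wt p q x y u v (map (fun j => j + m) s) = wt p q x y u v s.
Proof.
have mlt : {mono (fun j => j + m) : i j / i < j} by move=> i j; apply: ltn_add2r.
have mgt : {mono (fun j => j + m) : i j / j < i} by move=> i j; apply: ltn_add2r.
rewrite /wt -![asc _]/(adj_count (fun i j => i < j) _).
rewrite -![des _]/(adj_count (fun i j => j < i) _).
rewrite -![lmax _]/(left_records (fun i j => i < j) _).
rewrite -![lmin _]/(left_records (fun i j => j < i) _).
rewrite -![rmax _]/(right_records (fun i j => i < j) _).
rewrite -![rmin _]/(right_records (fun i j => j < i) _).
by rewrite !adj_count_map // !left_records_map // !right_records_map.
Qed.

Lemma wt_oplus (R : comNzRingType) (p q x y u v : R) a b : separable a -> separable b ->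
  wt p q x y u v (oplus a b) = (p * (wt p q x 1 u v a * wt p q x y 1 v b))%R.
Proof.
move=> sa sb; have a0 := separable_size_gt0 sa.
have b0 : 0 < size (map (fun j => j + size a) b) by rewrite size_map separable_size_gt0.
have ab := below_oplus (separable_perm_word sa) (separable_perm_word sb).
rewrite -(wt_shift p q x y 1 v (size a) b) /wt /oplus.
rewrite asc_cat // des_cat // lmax_cat // lmin_cat // rmax_cat // rmin_cat //.
by rewrite !exprD !expr1n expr1; ring.
Qed.

Lemma oplus_inj a b a' b' : size a = size a' -> oplus a b = oplus a' b' -> a = a' /\ b = b'.
Proof.
move=> sz E; have := congr1 (take (size a)) E; have := congr1 (drop (size a)) E.
rewrite /oplus !take_size_cat // !drop_size_cat // sz => /(inj_map (@addIn _)) -> ->.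
by [].
Qed.

Section ReducibleSum.
Variables PA PB : pred (seq nat).
Hypotheses (PA_sep : forall a, PA a -> separable a) (PB_sep : forall b, PB b -> separable b).
Hypothesis oplus_size_uniq : forall a b a' b',
  PA a -> PB b -> PA a' -> PB b' -> oplus a b = oplus a' b' -> size a = size a'.
Hypothesis reducible_oplus : forall s, separable s -> ~~ irreducible s ->
  exists a b, [/\ PA a, PB b & s = oplus a b].

Definition direct_sums n := [seq oplus ab.1 ab.2 | k <- iota 0 n.+1,
  ab <- [seq (a, b) | a <- [seq a <- perms k | PA a], b <- [seq b <- perms (n - k) | PB b]]].

Lemma mem_direct_sums n s :
  (s \in direct_sums n) = [&& sepb s, ~~ irreducible s & s \in perms n].
Proof.
apply/allpairsPdep/idP => [[k [_ [kn /allpairsP [[a b] [/= ha hb ->]] ->]]] | ].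
  move: ha hb kn; rewrite !mem_filter !mem_perms mem_iota /=.
  move=> /and3P [PAa pa /eqP ak] /and3P [PBb pb /eqP bk] kn.
  have [sa sb] := (PA_sep PAa, PB_sep PBb).
  rewrite (asboolT (sep_oplus sa sb)) oplus_reducible // perm_word_oplus //.
  by rewrite size_oplus ak bk subnKC //; lia.
move=> /and3P [/asboolP ss sr]; rewrite mem_perms => /andP [ps /eqP sn].
have [a [b [PAa PBb E]]] := reducible_oplus ss sr.
have := congr1 size E; rewrite size_oplus sn => nab.
exists (size a), (a, b); split; last by rewrite E.
  by rewrite mem_iota; lia.
apply/allpairsP; exists (a, b); split => //=; rewrite mem_filter mem_perms.
  by rewrite PAa (separable_perm_word (PA_sep PAa)) eqxx.
by rewrite PBb (separable_perm_word (PB_sep PBb)) nab addKn eqxx.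
Qed.

Lemma direct_sums_uniq n : uniq (direct_sums n).
Proof.
apply: allpairs_uniq_dep => [|k _|]; first exact: iota_uniq.
  by apply: allpairs_uniq; rewrite ?filter_uniq ?permutations_uniq // => -[? ?] [? ?].
move=> t t' /allpairsPdep [k [ab [_ /allpairsP [[a b] [ha hb ->]] ->]]].
move=> /allpairsPdep [k' [ab' [_ /allpairsP [[a' b'] [ha' hb' ->]] ->]]] /= E.
move: ha hb ha' hb'; rewrite /= !mem_filter !mem_perms.
move=> /andP [PAa /andP [_ /eqP <-]] /andP [PBb _] /andP [PAa' /andP [_ /eqP <-]] /andP [PBb' _].
have sz := oplus_size_uniq PAa PBb PAa' PBb' E.
by have [<- <-] := oplus_inj sz E.
Qed.

Lemma big_reducible (V : nmodType) (F : seq nat -> V) n :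
  (\sum_(s <- perms n | sepb s && ~~ irreducible s) F s =
   \sum_(k < n.+1) \sum_(a <- perms k | PA a) \sum_(b <- perms (n - k) | PB b) F (oplus a b))%R.
Proof.
transitivity (\sum_(s <- direct_sums n) F s)%R.
  rewrite -big_filter; apply/perm_big/uniq_perm; rewrite ?direct_sums_uniq //.
    by rewrite filter_uniq ?permutations_uniq.
  by move=> s; rewrite mem_filter mem_direct_sums andbA.
rewrite big_allpairs_dep -[iota 0 n.+1]/(index_iota 0 n.+1) big_mkord; apply: eq_bigr => k _.
by rewrite big_allpairs_dep big_filter; apply: eq_bigr => a _; rewrite big_filter.
Qed.

Lemma reducible_gf_factor (R : comNzRingType) (p q x y u v : R) :
  ser_sub (Sgf p q x y u v) (Igf p q x y u v) =
  ser_scale p (ser_mul (fun k => \sum_(a <- perms k | PA a) wt p q x 1 u v a)%R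
                       (fun k => \sum_(b <- perms k | PB b) wt p q x y 1 v b)%R).
Proof.
apply: funext => n; rewrite /ser_sub /Sgf /Igf (bigID irreducible) /= addrC addrK.
rewrite big_reducible /ser_scale /ser_mul big_distrr; apply: eq_bigr => k _ /=.
rewrite big_distrl big_distrr; apply: eq_bigr => a PAa /=.
rewrite big_distrr big_distrr; apply: eq_bigr => b PBb /=.
exact: wt_oplus (PA_sep PAa) (PB_sep PBb).
Qed.

End ReducibleSum.

Lemma ser_mulC (R : comNzRingType) (f g : nat -> R) : ser_mul f g = ser_mul g f.
Proof.
apply: funext => n; rewrite /ser_mul (reindex_inj rev_ord_inj); apply: eq_bigr => k _ /=.
by rewrite mulrC subSS subKn ?leq_ord.
Qed.

Local Open Scope ring_scope.

Theorem theorem10 (R : comNzRingType) (p q x y u v : R) :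
  ser_sub (Sgf p q x y u v) (Igf p q x y u v)
    = ser_scale p (ser_mul (Igf p q x 1 u v) (Sgf p q x y 1 v))
  /\ ser_sub (Sgf p q x y u v) (Igf p q x y u v)
    = ser_scale p (ser_mul (Igf p q x y 1 v) (Sgf p q x 1 u v)).
Proof.
split.
- apply: (reducible_gf_factor (PA := fun s => sepb s && irreducible s) (PB := fun s => sepb s)).
  + by move=> a /andP [/asboolP].
  + by move=> b /asboolP.
  + exact: oplus_irreducible_l_uniq.
  + exact: reducible_oplus_irreducible_l.
- rewrite ser_mulC.
  apply: (reducible_gf_factor (PA := fun s => sepb s) (PB := fun s => sepb s && irreducible s)).
  + by move=> a /asboolP.
  + by move=> b /andP [/asboolP].
  + exact: oplus_irreducible_r_uniq.
  + exact: reducible_oplus_irreducible_r.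
Qed.
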